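(* Let $\lambda=(\lambda^n_{s,h})_{n\in N,\,s\in S,\,h\in H}\in\mathbb{R}^{|S|\times|H|\times|N|}$ be any deterministic price decomposition process, and suppose the weekly uncertainties $(W_{s})_{s\in S}$ are weekly independent (the joint law of $(W_{s_0},\dots,W_{\bar s})$, together with any initial noise, is the product of the marginal laws). Then, for every initial state $x_0=(x_0^n)_{n\in N}\in\prod_{n\in N}X^n_{s_0}$, $$\sum_{n\in N} V^n_{s_0}[\lambda^n](x_0^n)+V^{A}[\lambda]\;\le\; V_{s_0}(x_0),$$ where $V_{s_0}(x_0)$ is the initial global cost-to-go (which, under weekly independence, equals the optimal value of the global multistage problem started at $x_0$).
   Context: Setting. Weeks form a finite totally ordered set $S=\{s_0\prec\dots\prec\bar s\}$, with successor $s^+$ and an extra terminal week $s_{\mathrm{last}}=\bar s^+$; hours form a finite ordered set $H$. The system is a directed graph $(N,A)$ with node–arc incidence matrix $B\in\{-1,0,1\}^{N\times A}$ ($B_{n,a}=1$ if arc $a$ leaves $n$, $-1$ if it enters $n$, $0$ otherwise). For node $n$ and week $s$: the state $x^n_s\in X^n_s$ is the storage level at the first hour of week $s$; $W^n_s$ is the (random) vector of hourly uncertainties of week $s$ at node $n$ with values in a measurable space; $u^n_s$ is the vector of hourly recourse controls of week $s$; $f^n_s\in\mathbb{R}^{|H|}$ is the vector of hourly nodal import/export flows; for arc $a$, $q^a_s\in\mathbb{R}^{|H|}$ is the vector of hourly arc flows. Write $W_s=(W^n_s)_{n\in N}$, $f_s=(f^n_s)_n$, $q_s=(q^a_s)_a$.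 Given are measurable weekly dynamics $x^n_{s^+}=g^n_s(x^n_s,w^n_s,u^n_s)$, weekly nodal balance functions with constraint $b^n_s(w^n_s,u^n_s)=f^n_s$, box constraints on the hourly storage levels within the week (obtained by composing hourly dynamics) and on the hourly controls, weekly nodal costs $L^n_s(x^n_s,w^n_s,u^n_s)\in\mathbb{R}\cup\{+\infty\}$, weekly arc costs $L^a_s(q^a_s)\in\mathbb{R}\cup\{+\infty\}$, and final costs $K^n$. Decisions of week $s'$ taken from week $s$ onwards must be measurable with respect to $\sigma(W_s,\dots,W_{s'})$ (weekly hazard–decision information). For the price, $\langle\lambda_s,f_s-Bq_s\rangle=\sum_{h\in H}\lambda_{s,h}^{\top}(f_{s,h}-Bq_{s,h})$ and $\langle\lambda^n_s,f^n_s\rangle=\sum_{h}\lambda^n_{s,h}f^n_{s,h}$. Global cost-to-go: $V_s(x)=\min\mathbb{E}\big[\sum_{s'=s}^{\bar s}\big(\sum_{n}L^n_{s'}(X^n_{s'},W^n_{s'},U^n_{s'})+\sum_a L^a_{s'}(Q^a_{s'})\big)+\sum_n K^n(X^n_{s_{\mathrm{last}}})\big]$ over processes $(U,F,Q)$ subject to $X_s=x$, the dynamics, balance, box constraints at each node, the information constraints, and the coupling $F_{s'}-BQ_{s'}=0$ for all $s'\in[s,\bar s]$. Nodal price cost-to-go: $V^n_s[\lambda^n](x^n)=\min\mathbb{E}\big[\sum_{s'=s}^{\bar s}\big(L^n_{s'}(X^n_{s'},W^n_{s'},U^n_{s'})+\langle\lambda^n_{s'},F^n_{s'}\rangle\big)+K^n(X^n_{s_{\mathrm{last}}})\big]$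 over $(U^n,F^n)$ subject to $X^n_s=x^n$, the nodal dynamics, balance, box constraints and information constraints. Arc price value function: $V^A[\lambda]=\min_{q}\big[\sum_{a\in A}\sum_{s\in S}L^a_s(q^a_s)-\langle B^\top\lambda,q\rangle\big]$ over deterministic arc flows $q$ (equivalently over adapted random arc flows in expectation). *)

From HB Require Import structures.
From mathcomp Require Import all_boot all_order all_algebra.
From mathcomp Require Import all_classical all_reals all_analysis.
From mathcomp Require Import measurable_realfun.
Set Implicit Arguments. Unset Strict Implicit. Unset Printing Implicit Defensive.
Import Order.TTheory GRing.Theory Num.Theory.
Import numFieldNormedType.Exports.
Local Open Scope classical_set_scope.
Local Open Scope ring_scope.

(* Conventions.
   - Weeks S = {s_0 < ... < \bar s} are 'I_T (s_0 = ord0); the terminal week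
     s_last = \bar s^+ is the index T.  States are indexed by 'I_T.+1
     (index k = storage level at the first hour of week k, k = T is s_last).
   - Hours H are 'I_nH; an hourly vector is a function 'I_nH -> R.
   - Nodes N and arcs A are finite types; the graph is given by the source and
     target of each arc; B is its node-arc incidence matrix. *)

Record system (R : realType) (T nH : nat) (N A : finType)
    (dX dW dU : measure_display) := System {
  src : A -> N;
  tgt : A -> N;
  Xt : N -> measurableType dX;
  Wt : N -> 'I_T -> measurableType dW;
  Ut : N -> 'I_T -> measurableType dU;
  Xset : forall n, 'I_T.+1 -> set (Xt n);
  dyn : forall n (s : 'I_T), Xt n -> Wt n s -> Ut n s -> Xt n;
  bal : forall n (s : 'I_T), Wt n s -> Ut n s -> 'I_nH -> R;
  (* box constraints of week s (hourly storage levels obtained by composing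
     hourly dynamics, and hourly controls) *)
  box : forall n (s : 'I_T), Xt n -> Wt n s -> Ut n s -> Prop;
  Lnode : forall n (s : 'I_T), Xt n -> Wt n s -> Ut n s -> \bar R;
  Larc : A -> 'I_T -> ('I_nH -> R) -> \bar R;
  Kfin : forall n, Xt n -> \bar R
}.

Arguments src {R T nH N A dX dW dU} _.
Arguments tgt {R T nH N A dX dW dU} _.
Arguments Xt {R T nH N A dX dW dU} _.
Arguments Wt {R T nH N A dX dW dU} _.
Arguments Ut {R T nH N A dX dW dU} _.
Arguments Xset {R T nH N A dX dW dU} _.
Arguments dyn {R T nH N A dX dW dU} _ {_ _}.
Arguments bal {R T nH N A dX dW dU} _ {_ _}.
Arguments box {R T nH N A dX dW dU} _ {_ _}.
Arguments Lnode {R T nH N A dX dW dU} _ {_ _}.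
Arguments Larc {R T nH N A dX dW dU} _.
Arguments Kfin {R T nH N A dX dW dU} _ {_}.

Section Model.
Variables (R : realType) (T nH : nat) (N A : finType)
  (dX dW dU : measure_display) (sys : system R T nH N A dX dW dU).

Definition incidence (n : N) (a : A) : R :=
  (src sys a == n)%:R - (tgt sys a == n)%:R.

Definition well_posed : Prop :=
  [/\ forall n (s : 'I_T), measurable_fun setT
        (fun p : Xt sys n * Wt sys n s * Ut sys n s => dyn sys p.1.1 p.1.2 p.2),
      forall n (s : 'I_T) (h : 'I_nH), measurable_fun setT
        (fun p : Wt sys n s * Ut sys n s => bal sys p.1 p.2 h),
      forall n (s : 'I_T), measurable
        [set p : Xt sys n * Wt sys n s * Ut sys n s | box sys p.1.1 p.1.2 p.2],
      forall n (k : 'I_T.+1), measurable (Xset sys n k) &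
    [/\ forall n (s : 'I_T), measurable_fun setT
        (fun p : Xt sys n * Wt sys n s * Ut sys n s => Lnode sys p.1.1 p.1.2 p.2 : \bar R),
      forall a (s : 'I_T), measurable_fun setT
        (fun t : nH.-tuple R => Larc sys a s (fun h => tnth t h)),
      forall n, measurable_fun setT (@Kfin _ _ _ _ _ _ _ _ sys n) &
      [/\ forall n s x w u, Lnode sys (n := n) (s := s) x w u != -oo%E,
          forall a s q, Larc sys a s q != -oo%E &
          forall n x, Kfin sys (n := n) x != -oo%E]]].

Variables (dO : measure_display) (Omega : measurableType dO)
  (P : probability Omega R).

Variable W : forall n (s : 'I_T), Omega -> Wt sys n s.

Definition sigmaW (s : 'I_T) : set (set Omega) :=
  <<s [set E | exists n (B : set (Wt sys n s)), measurable B /\ E = W n s @^-1` B] >>.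

Definition weekly_independent : Prop :=
  forall E : 'I_T -> set Omega, (forall s, sigmaW s (E s)) ->
    P (\bigcap_(s in [set: 'I_T]) E s) = (\prod_(s < T) P (E s))%E.

Definition info (s' : 'I_T) : set (set Omega) :=
  <<s [set E | exists n (r : 'I_T) (B : set (Wt sys n r)),
        (r <= s')%N /\ measurable B /\ E = W n r @^-1` B] >>.

Definition measurable_wrt {dY : measure_display} {Ym : measurableType dY}
    (F : set (set Omega)) (f : Omega -> Ym) : Prop :=
  forall B : set Ym, measurable B -> F (f @^-1` B).

Fixpoint traj (n : N) (x0 : Xt sys n) (U : forall s : 'I_T, Omega -> Ut sys n s)
    (k : nat) (w : Omega) : Xt sys n :=
  match k with
  | 0 => x0
  | k'.+1 =>
    match insub k' with
    | Some s => dyn sys (traj x0 U k' w) (W n s w) (U s w)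
    | None => traj x0 U k' w
    end
  end.

(* nodal admissibility: information constraints, a.s. balance, box and state
   constraints, and integrability (so that the expectations make sense) *)
Definition node_admissible (n : N) (x0 : Xt sys n)
    (U : forall s : 'I_T, Omega -> Ut sys n s) (F : 'I_T -> Omega -> 'I_nH -> R)
    : Prop :=
  [/\ forall s, measurable_wrt (info s) (U s),
      forall (s : 'I_T) (h : 'I_nH), measurable_wrt (info s) (fun w => F s w h),
      {ae P, forall w, (forall s : 'I_T,
          bal sys (W n s w) (U s w) = F s w
          /\ box sys (traj x0 U s w) (W n s w) (U s w))},
      {ae P, forall w, (forall k : 'I_T.+1, Xset sys n k (traj x0 U k w))} &
      [/\ forall s : 'I_T, P.-integrable setT
            (fun w => Lnode sys (traj x0 U s w) (W n s w) (U s w)),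
          P.-integrable setT (fun w => Kfin sys (traj x0 U T w)) &
          forall (s : 'I_T) (h : 'I_nH), P.-integrable setT (fun w => (F s w h)%:E)]].

Definition pairing (l f : 'I_nH -> R) : R := \sum_(h < nH) l h * f h.

Definition V_node (n : N) (lamn : 'I_T -> 'I_nH -> R) (x0 : Xt sys n) : \bar R :=
  ereal_inf [set c | exists U F, node_admissible x0 U F /\
    c = (\int[P]_w (\sum_(s < T) (Lnode sys (traj x0 U s w) (W n s w) (U s w)
                                  + (pairing (lamn s) (F s w))%:E)
                    + Kfin sys (traj x0 U T w)))%E].

Definition V_arc (lam : N -> 'I_T -> 'I_nH -> R) : \bar R :=
  ereal_inf [set c | exists q : A -> 'I_T -> 'I_nH -> R,
    c = (\sum_(a : A) \sum_(s < T) Larc sys a s (q a s)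
         - (\sum_(a : A) \sum_(s < T) \sum_(h < nH)
              (\sum_(n : N) incidence n a * lam n s h) * q a s h)%:E)%E].

Definition global_admissible (x0 : forall n, Xt sys n)
    (U : forall n (s : 'I_T), Omega -> Ut sys n s)
    (F : N -> 'I_T -> Omega -> 'I_nH -> R)
    (Q : A -> 'I_T -> Omega -> 'I_nH -> R) : Prop :=
  [/\ forall n, node_admissible (x0 n) (U n) (F n),
      forall a (s : 'I_T) (h : 'I_nH), measurable_wrt (info s) (fun w => Q a s w h),
      forall a (s : 'I_T) (h : 'I_nH), P.-integrable setT (fun w => (Q a s w h)%:E),
      forall a (s : 'I_T), P.-integrable setT (fun w => Larc sys a s (Q a s w)) &
      {ae P, forall w, (forall n (s : 'I_T) (h : 'I_nH),
          F n s w h - \sum_(a : A) incidence n a * Q a s w h = 0)}].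

Definition V_glob (x0 : forall n, Xt sys n) : \bar R :=
  ereal_inf [set c | exists U F Q, global_admissible x0 U F Q /\
    c = (\int[P]_w (\sum_(s < T)
            (\sum_(n : N) Lnode sys (traj (x0 n) (U n) s w) (W n s w) (U n s w)
             + \sum_(a : A) Larc sys a s (Q a s w))
          + \sum_(n : N) Kfin sys (traj (x0 n) (U n) T w)))%E].

End Model.
Arguments V_node {R T nH N A dX dW dU sys dO Omega} P W n lamn x0.

From HB Require Import structures.
From mathcomp Require Import all_boot all_order all_algebra.
From mathcomp Require Import all_classical all_reals all_analysis.
From mathcomp Require Import measurable_realfun.
Import Order.TTheory GRing.Theory Num.Theory.
Local Open Scope classical_set_scope.
Local Open Scope ring_scope.

(* Take any admissible global policy (U, F, Q).  Each nodal
   part (U^n, F^n) is admissible for the nodal price problem, and each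
   realization Q(w) of the arc flows is a candidate for the arc problem, so
   sum_n V^n[lambda^n] + V^A[lambda] is at most the expectation of the nodal
   price costs plus the arc price cost.  In that sum the price terms combine
   into <lambda, F - BQ>, which vanishes almost surely by the coupling
   constraint, and what remains is the global cost of (U, F, Q). *)

Lemma sum_mul_adjoint (R : comPzSemiRingType) (I J : finType)
    (B : I -> J -> R) (l : I -> R) (q : J -> R) :
  \sum_i l i * (\sum_j B i j * q j) = \sum_j (\sum_i B i j * l i) * q j.
Proof.
under eq_bigr do rewrite mulr_sumr.
under [RHS]eq_bigr do rewrite mulr_suml.
rewrite exchange_big; apply: eq_bigr => j _; apply: eq_bigr => i _.
by rewrite mulrCA mulrA.
Qed.

Lemma pairing_adjoint (R : comPzSemiRingType) (I J S H : finType)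
    (B : I -> J -> R) (l : I -> S -> H -> R) (q : J -> S -> H -> R) :
  \sum_i \sum_s \sum_h l i s h * (\sum_j B i j * q j s h) =
  \sum_j \sum_s \sum_h (\sum_i B i j * l i s h) * q j s h.
Proof.
rewrite exchange_big [RHS]exchange_big; apply: eq_bigr => s _.
rewrite exchange_big [RHS]exchange_big; apply: eq_bigr => h _.
exact: sum_mul_adjoint.
Qed.

Section ProbabilityIntegral.
Context (R : realType) (d : measure_display) (Omega : measurableType d)
  (P : probability Omega R).
Local Open Scope ereal_scope.

Lemma integrable_EFin_sum (I : Type) (r : seq I) (f : I -> Omega -> R) :
  (forall i, P.-integrable setT (fun w => (f i w)%:E)) ->
  P.-integrable setT (fun w => (\sum_(i <- r) f i w)%R%:E).
Proof.
move=> intf; under eq_fun do rewrite -sumEFin.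
by apply: integrable_sum => // i _; exact: intf.
Qed.

Lemma integrable_EFinZl (k : R) (f : Omega -> R) :
  P.-integrable setT (fun w => (f w)%:E) ->
  P.-integrable setT (fun w => (k * f w)%R%:E).
Proof. by move=> intf; under eq_fun do rewrite EFinM; exact: integrableZl. Qed.

Lemma lb_le_integral (x : \bar R) (g : Omega -> \bar R) :
  P.-integrable setT g -> (forall w, x <= g w) -> x <= \int[P]_w g w.
Proof.
have int_cst (k : \bar R) : \int[P]_w cst k w = k.
  by rewrite integral_cst //= probability_setT mule1.
case: x => [r| |] intg xg; last exact: leNye.
- rewrite -(int_cst r%:E); apply: le_integral => //.
  exact: finite_measure_integrable_cst.
- (* an integrable function cannot be +oo everywhere *)
  have gE : (fun w => `|g w|) = cst +oo.
    by apply/funext => w; have := xg w; rewrite leye_eq => /eqP ->.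
  by move: intg => /integrableP[_]; rewrite gE int_cst ltxx.
Qed.

End ProbabilityIntegral.

Section WeakDuality.
Context {R : realType} {T nH : nat} {N A : finType}
  {dX dW dU : measure_display} {sys : system R T nH N A dX dW dU}
  {dO : measure_display} {Omega : measurableType dO} {P : probability Omega R}
  {W : forall n (s : 'I_T), Omega -> Wt sys n s}
  (lam : N -> 'I_T -> 'I_nH -> R) {x0 : forall n, Xt sys n}
  {U : forall n (s : 'I_T), Omega -> Ut sys n s}
  {F : N -> 'I_T -> Omega -> 'I_nH -> R}
  {Q : A -> 'I_T -> Omega -> 'I_nH -> R}.
Hypothesis adm : global_admissible P W x0 U F Q.
Local Open Scope ereal_scope.

Let L n (s : 'I_T) w := Lnode sys (traj W (x0 n) (U n) s w) (W n s w) (U n s w).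
Let K n w := Kfin sys (traj W (x0 n) (U n) T w).
Let La a s w := Larc sys a s (Q a s w).
Let node_price n s w := pairing (lam n s) (F n s w).
Let arc_price w := (\sum_a \sum_(s < T) \sum_(h < nH)
  (\sum_n incidence sys n a * lam n s h) * Q a s w h)%R.
Let price_gap w := (\sum_n \sum_(s < T) node_price n s w - arc_price w)%R.

Let node_cost n w := \sum_(s < T) (L n s w + (node_price n s w)%:E) + K n w.
Let arc_cost w := \sum_a \sum_(s < T) La a s w - (arc_price w)%:E.
Let glob_cost w :=
  \sum_(s < T) (\sum_n L n s w + \sum_a La a s w) + \sum_n K n w.

Let node_price_integrable n s :
  P.-integrable setT (fun w => (node_price n s w)%:E).
Proof.
have [/(_ n)[_ _ _ _ [_ _ intF]] _ _ _ _] := adm.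
by apply: integrable_EFin_sum => h; exact: integrable_EFinZl.
Qed.

Let arc_price_integrable : P.-integrable setT (fun w => (arc_price w)%:E).
Proof.
have [_ _ intQ _ _] := adm.
do 3 apply: integrable_EFin_sum => ?; exact: integrable_EFinZl.
Qed.

Let node_cost_integrable n : P.-integrable setT (node_cost n).
Proof.
have [/(_ n)[_ _ _ _ [intL intK _]] _ _ _ _] := adm.
apply: integrableD => //; apply: integrable_sum => // s _.
by apply: integrableD => //; exact: intL.
Qed.

Let arc_cost_integrable : P.-integrable setT arc_cost.
Proof.
have [_ _ _ intLa _] := adm.
apply: integrableB => //.
by apply: integrable_sum => // a _; apply: integrable_sum => // s _; exact: intLa.
Qed.

Let glob_cost_integrable : P.-integrable setT glob_cost.
Proof.
have [intN _ _ intLa _] := adm.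
have intL n s : P.-integrable setT (L n s) by have [_ _ _ _ [+ _ _]] := intN n; apply.
have intK n : P.-integrable setT (K n) by have [_ _ _ _ []] := intN n.
apply: integrableD => //; last by apply: integrable_sum => // n _; exact: intK.
apply: integrable_sum => // s _.
apply: integrableD => //.
- by apply: integrable_sum => // n _; exact: intL.
- by apply: integrable_sum => // a _; exact: intLa.
Qed.

Let price_gap_integrable : P.-integrable setT (fun w => (price_gap w)%:E).
Proof.
under eq_fun do rewrite EFinB.
apply: integrableB => //.
do 2 apply: integrable_EFin_sum => ?; exact: node_price_integrable.
Qed.

Let node_arc_cost_split w :
  \sum_n node_cost n w + arc_cost w = glob_cost w + (price_gap w)%:E.
Proof.
rewrite /node_cost /glob_cost /price_gap big_split /=.
under eq_bigr do rewrite big_split /=.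
rewrite big_split /= [in RHS]big_split /=.
rewrite [\sum_(s < T) \sum_n L n s w]exchange_big [\sum_(s < T) \sum_a La a s w]exchange_big.
have sum_priceE : (\sum_n \sum_(s < T) node_price n s w)%:E =
    \sum_n \sum_(s < T) (node_price n s w)%:E.
  by rewrite -sumEFin; under eq_bigr do rewrite -sumEFin.
rewrite /arc_cost EFinB sum_priceE.
set cL := \sum_n \sum_(s < T) L n s w; set cK := \sum_n K n w.
set cA := \sum_a \sum_(s < T) La a s w.
set cP := \sum_n \sum_(s < T) (node_price n s w)%:E.
by rewrite (addeAC cL cP) addeACA (addeAC cL cK).
Qed.

Let price_gap_integral : \int[P]_w (price_gap w)%:E = 0.
Proof.
have [_ _ _ _ coupling] := adm.
rewrite (@ae_eq_integral _ _ _ P setT (cst 0)) ?integral0 //.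
- exact: measurable_int price_gap_integrable.
- apply: filterS coupling => w FBQ _ /=; congr EFin; apply/eqP.
  rewrite subr_eq0 /node_price /pairing /arc_price -pairing_adjoint.
  apply/eqP; do 3 (apply: eq_bigr => ? _); congr (_ * _)%R.
  by apply/eqP; rewrite -subr_eq0 FBQ.
Qed.

Lemma admissible_cost_ge_dual :
  \sum_n V_node P W n (lam n) (x0 n) + V_arc sys lam <= \int[P]_w glob_cost w.
Proof.
have [nodal_adm _ _ _ _] := adm.
have V_node_le : \sum_n V_node P W n (lam n) (x0 n) <= \sum_n \int[P]_w node_cost n w.
  apply: lee_sum => n _; apply: ereal_inf_lbound.
  by exists (U n), (F n); split; first exact: nodal_adm.
have V_arc_le : V_arc sys lam <= \int[P]_w arc_cost w.
  apply: lb_le_integral => // w; apply: ereal_inf_lbound.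
  by exists (fun a s => Q a s w).
apply: le_trans (leeD V_node_le V_arc_le) _.
rewrite -integral_sum // -integralD //; last exact: integrable_sum.
under eq_integral do rewrite node_arc_cost_split.
by rewrite integralD // price_gap_integral adde0.
Qed.

End WeakDuality.

Theorem proposition1 (R : realType) (T nH : nat) (N A : finType)
  (dX dW dU : measure_display) (sys : system R T nH N A dX dW dU)
  (dO : measure_display) (Omega : measurableType dO) (P : probability Omega R)
  (W : forall n (s : 'I_T), Omega -> Wt sys n s)
  (hT : (0 < T)%N)
  (hsys : well_posed sys)
  (hW : forall n s, measurable_fun setT (W n s))
  (hind : weekly_independent P W)
  (lam : N -> 'I_T -> 'I_nH -> R)
  (x0 : forall n, Xt sys n)
  (hx0 : forall n, Xset sys n ord0 (x0 n)) :
  (\sum_(n : N) V_node P W n (lam n) (x0 n) + V_arc sys lam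
     <= V_glob P W x0)%E.
Proof.
apply: le_ereal_inf_tmp => _ [U [F [Q [adm ->]]]].
exact (admissible_cost_ge_dual lam adm).
Qed.
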